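(* Let $\lambda$ be a nonzero real number. For any integer $p\ge2$, \[ \sum_{k=1}^{\infty}\frac{(-1)^{k-1}\lambda^{k-1}(1)_{k,1/\lambda}}{(k-1)!\,k^{p}(k+1)}=\sum_{k=1}^{p-1}(-1)^{k-1}\zeta_{\lambda}(p-k+1)+\frac{(-1)^{p-1}}{\lambda+1}. \]
   Context: For real $x$ and $\mu\neq 0$, set $(x)_{0,\mu}=1$ and $(x)_{n,\mu}=x(x-\mu)\cdots(x-(n-1)\mu)$ for $n\ge1$; thus $(1)_{k,1/\lambda}=1\cdot(1-\tfrac1\lambda)\cdots(1-\tfrac{k-1}{\lambda})$. The degenerate zeta function is $\zeta_{\lambda}(s)=\sum_{n=1}^{\infty}\frac{(-1)^{n-1}\lambda^{n-1}(1)_{n,1/\lambda}}{(n-1)!\,n^{s}}$ for $\mathrm{Re}(s)>1$. *)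

From Stdlib Require Import Reals.
From Coquelicot Require Export Coquelicot.
Open Scope R_scope.

Fixpoint dfall (x mu : R) (n : nat) : R :=
  match n with
  | O => 1
  | S m => dfall x mu m * (x - INR m * mu)
  end.

(** Coefficient  (-1)^{n-1} lambda^{n-1} (1)_{n,1/lambda} / (n-1)!  (used for n >= 1). *)
Definition dcoef (lam : R) (n : nat) : R :=
  (-1) ^ (n - 1) * lam ^ (n - 1) * dfall 1 (1 / lam) n / INR (Factorial.fact (n - 1)).

(** Terms of the degenerate zeta series at an integer argument s:
    the m-th term (m >= 0) is the term with index n = m+1. *)
Definition dzeta_term (lam : R) (s : nat) (m : nat) : R :=
  dcoef lam (S m) / INR (S m) ^ s.

Definition dzeta (lam : R) (s : nat) : R := Series (dzeta_term lam s).

(** With [A m = dcoef lam (S m)] one has [A (m+1) = A m (m+1-lam)/(m+1)], so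
    [A m/((m+1)(m+2))] telescopes: the partial sums of the case [p = 1] equal
    [(1 - A (n+1)/(n+2))/(lam+1)].  Convergence of [zeta_lam(2)], i.e. of
    [sum A m/(m+1)^2], forces [lam > -1] and [A m/(m+1) -> 0]: eventually this
    sequence has constant sign and decreasing modulus, and for a nonnegative
    nonincreasing [v] the block [m = n..2n] of [sum v m/(m+1)] is at least
    [v (2n)/2].  The general case
    follows by induction from [1/(k^(p+1)(k+1)) = 1/k^(p+1) - 1/(k^p(k+1))]. *)
From Stdlib Require Import Reals Lra Lia.
From Coquelicot Require Import Coquelicot.
Open Scope R_scope.

Lemma INR_S_neq0 (n : nat) : INR (S n) <> 0.
Proof. apply not_0_INR; lia. Qed.

Lemma INR_S_pos (n : nat) : 0 < INR (S n).
Proof. apply lt_0_INR; lia. Qed.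

Lemma sum_n_m_le_loc (a b : nat -> R) (n m : nat) :
  (forall k, (n <= k <= m)%nat -> a k <= b k) -> sum_n_m a n m <= sum_n_m b n m.
Proof.
  intros Hab. rewrite (sum_n_m_ext_loc a (fun k => Rmin (a k) (b k))).
  - apply sum_n_m_le. intros k; apply Rmin_r.
  - intros k Hk. rewrite Rmin_left; auto.
Qed.

Lemma sum_n_m_Ropp (f : nat -> R) (n m : nat) :
  sum_n_m (fun k => - f k) n m = - sum_n_m f n m.
Proof.
  rewrite <- (Rmult_1_l (sum_n_m f n m)), Ropp_mult_distr_l.
  rewrite <- (sum_n_m_mult_l (-1) f). apply sum_n_m_ext. intros k.
  unfold mult; simpl. ring.
Qed.

Lemma sum_div_succ_block_ge (v : nat -> R) (n : nat) (c : R) :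
  0 <= c -> (forall k, (n <= k <= 2 * n)%nat -> c <= v k) ->
  c / 2 <= sum_n_m (fun k => v k / INR (S k)) n (2 * n).
Proof.
  intros Hc Hv.
  apply Rle_trans with (sum_n_m (fun _ => c / INR (S (2 * n))) n (2 * n)).
  - rewrite sum_n_m_const. replace (S (2 * n) - n)%nat with (S n) by lia.
    rewrite !S_INR, mult_INR. simpl (INR 2).
    assert (0 <= INR n) by apply pos_INR.
    replace ((INR n + 1) * (c / ((1 + 1) * INR n + 1)))
      with (c / 2 + c / (2 * (2 * INR n + 1))) by (field; lra).
    assert (0 <= c / (2 * (2 * INR n + 1))) by (apply Rdiv_le_0_compat; lra).
    lra.
  - apply sum_n_m_le_loc. intros k Hk.
    assert (INR (S k) <= INR (S (2 * n))) by (apply le_INR; lia).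
    pose proof (INR_S_pos k).
    apply Rle_trans with (c / INR (S k)).
    + apply Rmult_le_compat_l; auto. apply Rinv_le_contravar; auto.
    + apply Rmult_le_compat_r; [left; apply Rinv_0_lt_compat|]; auto.
Qed.

Lemma ex_series_block_small (a : nat -> R) : ex_series a ->
  forall eps, 0 < eps -> exists N, forall n, (N <= n)%nat -> Rabs (sum_n_m a n (2 * n)) < eps.
Proof.
  intros Ha eps Heps. destruct (Cauchy_ex_series a Ha (mkposreal eps Heps)) as [N HN].
  exists N. intros n Hn. apply (HN n (2 * n)%nat); lia.
Qed.

Lemma not_ex_series_div_succ_ge (v : nat -> R) (c : R) :
  0 < c -> (forall k, c <= v k) -> ~ ex_series (fun k => v k / INR (S k)).
Proof.
  intros Hc Hv Hex.
  destruct (ex_series_block_small _ Hex (c / 2)) as [N HN]; [lra|].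
  pose proof (HN N (le_n N)).
  pose proof (sum_div_succ_block_ge v N c ltac:(lra) (fun k _ => Hv k)).
  pose proof (Rle_abs (sum_n_m (fun k => v k / INR (S k)) N (2 * N))).
  lra.
Qed.

Lemma is_lim_seq_0_of_ex_series_div_succ (v : nat -> R) (K : nat) :
  (forall m, (K <= m)%nat -> 0 <= v (S m) <= v m) ->
  ex_series (fun k => v k / INR (S k)) -> is_lim_seq v 0.
Proof.
  intros Hstep Hex.
  assert (Hmon : forall j k, (K <= j <= k)%nat -> v k <= v j).
  { intros j k Hjk. induction k as [|k IH].
    - replace j with 0%nat by lia. lra.
    - destruct (Nat.eq_dec j (S k)) as [->|Hne]; [lra|].
      pose proof (Hstep k ltac:(lia)). specialize (IH ltac:(lia)). lra. }
  assert (Hpos : forall k, (K < k)%nat -> 0 <= v k).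
  { intros [|k] Hk; [lia|]. apply Hstep; lia. }
  apply is_lim_seq_spec. intros eps.
  destruct (ex_series_block_small _ Hex (eps / 2)) as [N HN];
    [destruct eps; simpl; lra|].
  remember (S (N + K)) as n eqn:Hn.
  exists (2 * n)%nat. intros m Hm.
  pose proof (HN n ltac:(lia)).
  pose proof (sum_div_succ_block_ge v n (v (2 * n)%nat)
                (Hpos (2 * n)%nat ltac:(lia)) (fun k Hk => Hmon k (2 * n)%nat ltac:(lia))).
  pose proof (Rle_abs (sum_n_m (fun k => v k / INR (S k)) n (2 * n))).
  pose proof (Hmon (2 * n)%nat m ltac:(lia)).
  pose proof (Hpos m ltac:(lia)).
  rewrite Rminus_0_r, Rabs_pos_eq by auto. lra.
Qed.

Lemma nonneg_nonincreasing_of_ratio (v r : nat -> R) (K : nat) :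
  (forall m, (K <= m)%nat -> v (S m) = v m * r m) ->
  (forall m, (K <= m)%nat -> 0 <= r m <= 1) ->
  0 <= v K -> forall m, (K <= m)%nat -> 0 <= v (S m) <= v m.
Proof.
  intros Hrec Hr HK.
  assert (Hpos : forall m, (K <= m)%nat -> 0 <= v m).
  { intros m Hm. induction Hm as [|m Hm IH]; auto.
    rewrite Hrec by auto. pose proof (Hr m Hm). nra. }
  intros m Hm. rewrite Hrec by auto. pose proof (Hr m Hm). pose proof (Hpos m Hm). nra.
Qed.

(** The sign of [v K] persists from [K] on, so [v] or [- v] is eventually
    nonnegative and nonincreasing. *)
Lemma is_lim_seq_0_of_ratio (v r : nat -> R) (K : nat) :
  (forall m, (K <= m)%nat -> v (S m) = v m * r m) ->
  (forall m, (K <= m)%nat -> 0 <= r m <= 1) ->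
  ex_series (fun k => v k / INR (S k)) -> is_lim_seq v 0.
Proof.
  intros Hrec Hr Hex. destruct (Rle_or_lt 0 (v K)) as [HK|HK].
  - apply (is_lim_seq_0_of_ex_series_div_succ v K); auto.
    apply (nonneg_nonincreasing_of_ratio v r); auto.
  - assert (Hopp : is_lim_seq (fun m => - v m) 0).
    { apply (is_lim_seq_0_of_ex_series_div_succ _ K).
      - apply (nonneg_nonincreasing_of_ratio (fun m => - v m) r); auto; [|lra].
        intros m Hm. rewrite Hrec by auto. ring.
      - apply ex_series_ext with (fun k => opp (v k / INR (S k))).
        + intros k. unfold opp; simpl. field. apply INR_S_neq0.
        + apply (ex_series_opp (fun k => v k / INR (S k))), Hex. }
    apply is_lim_seq_opp in Hopp. simpl in Hopp. rewrite Ropp_0 in Hopp.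
    apply is_lim_seq_ext with (2 := Hopp). intros m. apply Ropp_involutive.
Qed.

Lemma dcoef_1 (lam : R) : dcoef lam 1 = 1.
Proof. unfold dcoef; simpl. rewrite Rmult_0_l. field. Qed.

Lemma dcoef_SS (lam : R) (m : nat) : lam <> 0 ->
  dcoef lam (S (S m)) = dcoef lam (S m) * (INR (S m) - lam) / INR (S m).
Proof.
  intros Hlam. unfold dcoef.
  replace (S (S m) - 1)%nat with (S m) by lia. replace (S m - 1)%nat with m by lia.
  change (dfall 1 (1 / lam) (S (S m)))
    with (dfall 1 (1 / lam) (S m) * (1 - INR (S m) * (1 / lam))).
  rewrite fact_simpl, mult_INR.
  pose proof (INR_S_neq0 m). pose proof (INR_fact_neq_0 m).
  simpl pow. field. auto.
Qed.

Definition dcoef_div (lam : R) (m : nat) : R := dcoef lam (S m) / INR (S m).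

Lemma dcoef_div_0 (lam : R) : dcoef_div lam 0 = 1.
Proof. unfold dcoef_div. rewrite dcoef_1. simpl. field. Qed.

Lemma dcoef_div_S (lam : R) (m : nat) : lam <> 0 ->
  dcoef_div lam (S m) = dcoef_div lam m * ((INR (S m) - lam) / INR (S (S m))).
Proof.
  intros Hlam. unfold dcoef_div. rewrite dcoef_SS by auto.
  pose proof (INR_S_neq0 m). pose proof (INR_S_neq0 (S m)).
  field. auto.
Qed.

Lemma dzeta_term_2 (lam : R) (m : nat) :
  dzeta_term lam 2 m = dcoef_div lam m / INR (S m).
Proof. unfold dzeta_term, dcoef_div. pose proof (INR_S_neq0 m). simpl. field. auto. Qed.

Lemma dcoef_div_ge_1 (lam : R) (m : nat) : lam <= -1 -> 1 <= dcoef_div lam m.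
Proof.
  intros Hlam. induction m as [|m IH].
  - rewrite dcoef_div_0. lra.
  - rewrite dcoef_div_S by lra.
    assert (1 <= (INR (S m) - lam) / INR (S (S m))).
    { pose proof (INR_S_pos (S m)). apply Rcomplements.Rle_div_r; [lra|].
      rewrite (S_INR (S m)). lra. }
    nra.
Qed.

Lemma ex_series_dzeta_term_2_gt_m1 (lam : R) :
  ex_series (dzeta_term lam 2) -> -1 < lam.
Proof.
  intros Hex. destruct (Rle_or_lt lam (-1)) as [Hle|]; auto. exfalso.
  apply (not_ex_series_div_succ_ge (dcoef_div lam) 1); [lra| |].
  - intros k. apply dcoef_div_ge_1, Hle.
  - apply ex_series_ext with (2 := Hex). intros k. apply dzeta_term_2.
Qed.

Lemma dcoef_div_lim_0 (lam : R) : lam <> 0 ->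
  ex_series (dzeta_term lam 2) -> is_lim_seq (dcoef_div lam) 0.
Proof.
  intros Hlam Hex. pose proof (ex_series_dzeta_term_2_gt_m1 lam Hex).
  destruct (INR_unbounded lam) as [K HK].
  apply (is_lim_seq_0_of_ratio _ (fun m => (INR (S m) - lam) / INR (S (S m))) K).
  - intros m _. apply dcoef_div_S, Hlam.
  - intros m Hm. assert (INR K <= INR m) by (apply le_INR; auto).
    pose proof (INR_S_pos (S m)). rewrite !S_INR in *. split.
    + apply Rdiv_le_0_compat; lra.
    + apply Rcomplements.Rle_div_l; lra.
  - apply ex_series_ext with (2 := Hex). intros k. apply dzeta_term_2.
Qed.

Lemma sum_n_dcoef_telescope (lam : R) (n : nat) : lam <> 0 -> lam <> -1 ->
  sum_n (fun m => dcoef lam (S m) / (INR (S m) * INR (S (S m)))) n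
  = (1 - dcoef_div lam (S n)) / (lam + 1).
Proof.
  intros Hlam Hlam1. assert (lam + 1 <> 0) by (intros ?; apply Hlam1; lra).
  assert (Hstep : forall m, dcoef lam (S m) / (INR (S m) * INR (S (S m)))
                            = (dcoef_div lam m - dcoef_div lam (S m)) / (lam + 1)).
  { intros m. rewrite dcoef_div_S by auto. unfold dcoef_div.
    pose proof (INR_S_neq0 m). pose proof (INR_S_pos (S m)).
    rewrite (S_INR (S m)) in *. field. repeat split; lra. }
  induction n as [|n IH].
  - rewrite sum_O, Hstep, dcoef_div_0. reflexivity.
  - rewrite sum_Sn, IH, Hstep. unfold plus; simpl. field. auto.
Qed.

Lemma is_series_dcoef_pow_1 (lam : R) : lam <> 0 -> ex_series (dzeta_term lam 2) ->
  is_series (fun m => dcoef lam (S m) / (INR (S m) ^ 1 * INR (S (S m)))) (1 / (lam + 1)).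
Proof.
  intros Hlam Hex. pose proof (ex_series_dzeta_term_2_gt_m1 lam Hex).
  apply is_series_ext with (fun m => dcoef lam (S m) / (INR (S m) * INR (S (S m)))).
  { intros m. rewrite pow_1. reflexivity. }
  change (is_lim_seq (sum_n (fun m => dcoef lam (S m) / (INR (S m) * INR (S (S m)))))
                     (1 / (lam + 1))).
  apply is_lim_seq_ext with (fun n => (1 - dcoef_div lam (S n)) / (lam + 1)).
  { intros n. symmetry. apply sum_n_dcoef_telescope; lra. }
  replace (Finite (1 / (lam + 1))) with (Rbar_mult (1 - 0) (/ (lam + 1)))
    by (simpl; f_equal; field; lra).
  apply is_lim_seq_scal_r, is_lim_seq_minus'; [apply is_lim_seq_const|].
  apply (is_lim_seq_incr_1 (dcoef_div lam)), dcoef_div_lim_0; auto.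
Qed.

Definition dzeta_alt_sum (lam : R) (p : nat) : R :=
  sum_n_m (fun k => (-1) ^ (k - 1) * dzeta lam (p - k + 1)) 1 (p - 1)
  + (-1) ^ (p - 1) / (lam + 1).

Lemma dzeta_alt_sum_1 (lam : R) : dzeta_alt_sum lam 1 = 1 / (lam + 1).
Proof.
  unfold dzeta_alt_sum. rewrite sum_n_m_zero by lia. unfold zero; simpl. ring.
Qed.

Lemma dzeta_alt_sum_S (lam : R) (q : nat) :
  dzeta_alt_sum lam (S (S q)) = dzeta lam (S (S q)) - dzeta_alt_sum lam (S q).
Proof.
  unfold dzeta_alt_sum.
  replace (S (S q) - 1)%nat with (S q) by lia. replace (S q - 1)%nat with q by lia.
  rewrite sum_Sn_m by lia. rewrite <- sum_n_m_S.
  rewrite (sum_n_m_ext_loc _ (fun k => - ((-1) ^ (k - 1) * dzeta lam (S q - k + 1)))).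
  - rewrite sum_n_m_Ropp. change (plus ?x ?y) with (x + y).
    replace (S (S q) - 1 + 1)%nat with (S (S q)) by lia.
    rewrite Nat.sub_diag, pow_O, <- tech_pow_Rmult. unfold Rdiv. lra.
  - intros k Hk.
    replace (S (S q) - S k + 1)%nat with (S q - k + 1)%nat by lia.
    replace (S k - 1)%nat with (S (k - 1)) by lia. simpl pow. lra.
Qed.

Lemma is_series_dcoef_pow_succ (lam : R) (q : nat) : lam <> 0 ->
  ex_series (dzeta_term lam 2) ->
  (forall s : nat, (2 <= s <= S q)%nat -> ex_series (dzeta_term lam s)) ->
  is_series (fun m => dcoef lam (S m) / (INR (S m) ^ S q * INR (S (S m))))
            (dzeta_alt_sum lam (S q)).
Proof.
  intros Hlam H2. induction q as [|q IH]; intros Hs.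
  - rewrite dzeta_alt_sum_1. apply is_series_dcoef_pow_1; auto.
  - assert (Hz : is_series (dzeta_term lam (S (S q))) (dzeta lam (S (S q)))).
    { apply Series_correct, Hs. lia. }
    pose proof (is_series_minus _ _ _ _ Hz (IH (fun s Hs' => Hs s ltac:(lia)))) as Hdiff.
    rewrite dzeta_alt_sum_S.
    apply is_series_ext with (2 := Hdiff). intros m.
    change (plus ?x (opp ?y)) with (x - y). unfold dzeta_term.
    change (INR (S m) ^ S (S q)) with (INR (S m) * INR (S m) ^ S q).
    pose proof (INR_S_pos m). pose proof (INR_S_pos (S m)).
    assert (INR (S m) ^ S q <> 0) by (apply pow_nonzero; lra).
    rewrite (S_INR (S m)) in *.
    match goal with |- ?a = ?b => change (@eq R a b) end. field. repeat split; lra.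
Qed.

Theorem theorem3 (lam : R) (p : nat) :
  lam <> 0 ->
  (2 <= p)%nat ->
  (* the values zeta_lambda(s), s = 2, ..., p, occurring on the right are defined *)
  (forall s : nat, (2 <= s <= p)%nat -> ex_series (dzeta_term lam s)) ->
  is_series
    (fun m : nat => dcoef lam (S m) / (INR (S m) ^ p * INR (S (S m))))
    (sum_n_m (fun k : nat => (-1) ^ (k - 1) * dzeta lam (p - k + 1)) 1 (p - 1)
     + (-1) ^ (p - 1) / (lam + 1)).
Proof.
  intros Hlam Hp Hs. destruct p as [|q]; [lia|].
  exact (is_series_dcoef_pow_succ lam q Hlam (Hs 2%nat ltac:(lia)) Hs).
Qed.
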